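(* Let $G$ be a map graph with a corresponding planar bipartite graph $B$ and let $k$ be a positive integer. Let $\mathcal{C}\in\mathscr{S}$ and write $\mathcal{C}=\mathcal{C}_1\uplus\mathcal{C}_2$, where a cycle belongs to $\mathcal{C}_1$ if and only if it is a triangle contained in a special clique of $G$. Let $K_1$ and $K_2$ be special cliques of $G$. Then there do not exist two distinct vertices $u,v\in V(\mathcal{C}_2)\cap K_1\cap K_2$ and four edges $e_1,e_2,e_3,e_4$ such that (a) $e_1,e_2\in E(\mathcal{C}_2)\cap E(K_1)$, (b) $e_3,e_4\in E(\mathcal{C}_2)\cap E(K_2)$, (c) $u$ is incident with $e_1$ and $e_3$, and (d) $v$ is incident with $e_2$ and $e_4$.
   Context: All graphs are finite and simple. For a set $\mathcal{C}_2$ of cycles, $V(\mathcal{C}_2)$ and $E(\mathcal{C}_2)$ denote the union of their vertex sets and edge sets; $E(K)$ denotes the set of edges with both endpoints in $K$. For a bipartite graph $B$ with bipartition $V(B)=W\uplus U$, the half-square of $B$ is the graph on $W$ in which two vertices are adjacent iff they are at distance exactly $2$ in $B$. A graph $G$ is a map graph iff it is the half-square of some planar bipartite graph $B$; such $B$ (with $W=V(G)$) is a corresponding planar bipartite graph; for each $s\in U$, $N_B(s)$ is a clique of $G$ called a special clique. A solution is a set of $k$ pairwise vertex-disjoint cycles of $G$. $\mathscr{S}$ denotes the set of solutions consisting only of induced cycles of $G$ that, among all such solutions, have the maximum number of members that are triangles contained in a special clique. *)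

From Stdlib Require Import Reals.
From mathcomp Require Import all_boot.

Set Implicit Arguments.
Unset Strict Implicit.
Unset Printing Implicit Defensive.

(* Planarity: a finite simple graph (V, adj) is planar iff it admits a *)
(* drawing in the plane R^2: distinct points for vertices and, for each *)
(* edge, a Jordan arc (continuous injective image of [0,1]) joining its *)
(* endpoints, whose interior avoids all vertex points and the interiors *)
(* of the arcs of all other edges.                                     *)

Section Planarity.
Local Open Scope R_scope.

(* sup-distance on R^2 (induces the usual topology) *)
Definition pdist (p q : R * R) : R :=
  Rmax (Rabs (fst p - fst q)) (Rabs (snd p - snd q)).

Definition jordan_arc (g : R -> R * R) : Prop :=
  (forall t : R, (0 <= t <= 1) -> forall eps : R, (0 < eps) ->
     exists delta : R, (0 < delta) /\
       forall t' : R, (0 <= t' <= 1) -> (Rabs (t' - t) < delta) ->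
         (pdist (g t') (g t) < eps)) /\
  (forall t t' : R, (0 <= t <= 1) -> (0 <= t' <= 1) -> g t = g t' -> t = t').

Definition planar (V : finType) (adj : rel V) : Prop :=
  exists (p : V -> R * R) (gam : V -> V -> R -> R * R),
    injective p /\
    (forall x y, adj x y ->
       [/\ jordan_arc (gam x y), gam x y 0 = p x, gam x y 1 = p y,
           (forall t : R, gam y x t = gam x y (1 - t)) &
           (forall (t : R) z, (0 < t < 1) -> gam x y t <> p z)]) /\
    (forall x y x' y', adj x y -> adj x' y' -> [set x; y] != [set x'; y'] ->
       forall t t' : R, (0 < t < 1) -> (0 < t' < 1) -> gam x y t <> gam x' y' t').

End Planarity.

(* Bipartite graphs B with bipartition W (+) U, given by r : W -> U -> bool *)

Definition bip_adj (W U : finType) (r : W -> U -> bool) : rel (W + U)%type :=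
  fun a b => match a, b with
             | inl w, inr s => r w s
             | inr s, inl w => r w s
             | _, _ => false
             end.

(* half-square of B on W: distance exactly 2 in B (B is bipartite, so this
   means distinct with a common neighbour in U) *)
Definition half_square (W U : finType) (r : W -> U -> bool) : rel W :=
  fun x y => (x != y) && [exists s : U, r x s && r y s].

Definition special_clique (W U : finType) (r : W -> U -> bool) (s : U) : {set W} :=
  [set w | r w s].

(* Cycles of a graph (W, g): represented by the cyclic sequence of their *)
(* vertices.                                                             *)

Section Cycles.
Variable W : finType.
Variable g : rel W.

Definition is_cycle (c : seq W) : Prop :=
  [/\ 3 <= size c, uniq c & cycle g c].

Definition cverts (c : seq W) : {set W} := [set x in c].

(* edges of the cycle, as 2-element vertex sets *)
Definition cedges (c : seq W) : {set {set W}} :=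
  [set [set x; next c x] | x in cverts c].

Definition is_induced_cycle (c : seq W) : Prop :=
  is_cycle c /\
  forall x y, x \in c -> y \in c -> g x y -> [set x; y] \in cedges c.

Definition solution (k : nat) (C : seq (seq W)) : Prop :=
  [/\ size C = k, (forall c, c \in C -> is_cycle c) &
      (forall i j, i < size C -> j < size C -> i != j ->
         [disjoint cverts (nth [::] C i) & cverts (nth [::] C j)])].

Definition induced_solution (k : nat) (C : seq (seq W)) : Prop :=
  solution k C /\ (forall c, c \in C -> is_induced_cycle c).

(* edge set E(K) of the graph g restricted to K *)
Definition is_edge (e : {set W}) : Prop :=
  exists x y, g x y /\ e = [set x; y].

End Cycles.

Definition special_triangle (W U : finType) (r : W -> U -> bool) (c : seq W) : bool :=
  (size c == 3) && [exists s : U, cverts c \subset special_clique r s].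

Definition n_special_triangles (W U : finType) (r : W -> U -> bool)
  (C : seq (seq W)) : nat := count (special_triangle r) C.

Definition in_scrS (W U : finType) (r : W -> U -> bool) (g : rel W) (k : nat)
  (C : seq (seq W)) : Prop :=
  induced_solution g k C /\
  forall C', induced_solution g k C' ->
    n_special_triangles r C' <= n_special_triangles r C.

Definition C2_part (W U : finType) (r : W -> U -> bool) (C : seq (seq W)) :=
  [seq c <- C | ~~ special_triangle r c].

Definition verts_of (W : finType) (C : seq (seq W)) : {set W} :=
  \bigcup_(c <- C) cverts c.

Definition edges_of (W : finType) (C : seq (seq W)) : {set {set W}} :=
  \bigcup_(c <- C) cedges c.

From Stdlib Require Import Reals.
From mathcomp Require Import all_boot.

Set Implicit Arguments.
Unset Strict Implicit.
Unset Printing Implicit Defensive.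

(* In a solution of S, no cycle of C_2 can contain three vertices of a special
   clique: replacing it by the triangle on those vertices would give an induced
   solution with one more special triangle.  If u and v lie on the same cycle,
   the two distinct K_1-edges e_1, e_2 already provide three such vertices.
   Otherwise write e_1 = ua, e_3 = ub, e_2 = vc, e_4 = vd: the triangles uac in
   K_1 and bvd in K_2 are vertex-disjoint and lie on the two cycles of u and v,
   and replacing these two cycles by them gains two special triangles. *)

Lemma sub_in_count_ltn (T : eqType) (a b : pred T) (s : seq T) x :
  {in s, subpred a b} -> x \in s -> b x -> ~~ a x -> count a s < count b s.
Proof.
move=> sub_ab xs bx nax.
have -> : count b s = count a s + count (predD b a) s.
  rewrite -count_predUI (@eq_count _ (predI _ _) pred0) => [|y /=]; last first.
    by rewrite andbA andbN.
  rewrite count_pred0 addn0; apply: eq_in_count => y ys /=.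
  by case: (boolP (a y)) => [/(sub_ab y ys)|]; rewrite ?andbT.
by rewrite -[X in X < _]addn0 ltn_add2l -has_count; apply/hasP; exists x => //=; rewrite nax.
Qed.

Lemma mem_bigcup_seq (I : eqType) (T : finType) (F : I -> {set T}) (s : seq I) x :
  x \in \bigcup_(i <- s) F i -> exists2 i, i \in s & x \in F i.
Proof.
elim: s => [|i s IH]; first by rewrite big_nil inE.
rewrite big_cons inE => /orP[xFi | /IH[j js xFj]]; first by exists i; rewrite ?mem_head.
by exists j; rewrite // inE js orbT.
Qed.

Lemma triangle_induced_cycle (W : finType) (g : rel W) x y z :
  irreflexive g -> g x y -> g y z -> g z x -> is_induced_cycle g [:: x; y; z].
Proof.
move=> irr gxy gyz gzx.
have neq a b : g a b -> a != b by apply: contraTneq => ->; rewrite irr.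
have [yx zy] : (y == x) = false /\ (z == y) = false.
  by split; apply/negbTE; rewrite eq_sym neq.
have edge a b : a \in [:: x; y; z] -> next [:: x; y; z] a = b ->
    [set a; b] \in cedges [:: x; y; z].
  by move=> ac <-; apply: imset_f; rewrite inE.
have exy : [set x; y] \in cedges [:: x; y; z] by rewrite edge ?mem_head //= eqxx.
have eyz : [set y; z] \in cedges [:: x; y; z] by rewrite edge ?inE ?eqxx ?orbT //= yx eqxx.
have ezx : [set z; x] \in cedges [:: x; y; z].
  by rewrite edge ?inE ?eqxx ?orbT //= (negbTE (neq _ _ gzx)) zy eqxx.
split.
  split=> //=; last by rewrite gxy gyz gzx.
  by rewrite !inE negb_or (neq _ _ gxy) (neq _ _ gyz) eq_sym (neq _ _ gzx).
move=> p q; rewrite !inE => /or3P[]/eqP-> /or3P[]/eqP->; rewrite ?irr // => _;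
  by rewrite ?exy ?eyz ?ezx // setUC ?exy ?eyz ?ezx.
Qed.

Lemma clique_special_triangle (W U : finType) (r : W -> U -> bool) s x y z :
  x \in special_clique r s -> y \in special_clique r s -> z \in special_clique r s ->
  special_triangle r [:: x; y; z].
Proof.
rewrite !inE => xK yK zK; apply/andP; split=> //; apply/existsP; exists s.
by apply/subsetP => w; rewrite !inE => /or3P[]/eqP->.
Qed.

Section Solutions.

Variables (W U : finType) (r : W -> U -> bool) (g : rel W) (k : nat) (C : seq (seq W)).

Lemma solution_index_uniq p q x :
  solution g k C -> p < size C -> q < size C ->
  x \in cverts (nth [::] C p) -> x \in cverts (nth [::] C q) -> p = q.
Proof.
move=> [_ _ disjC] pC qC xp xq; apply/eqP/negPn/negP.
by move=> /(disjC p q pC qC)/(@disjointFr _ _ _ x)/(_ xp); rewrite xq.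
Qed.

Lemma edges_of_C2_part e :
  e \in edges_of (C2_part r C) ->
  exists2 i, i < size C &
    (e \subset cverts (nth [::] C i)) && ~~ special_triangle r (nth [::] C i).
Proof.
case/mem_bigcup_seq=> c; rewrite mem_filter => /andP[nsp cC] /imsetP[x xc ->].
exists (index c C); rewrite ?index_mem // nth_index // nsp andbT.
by apply/subsetP => y; rewrite !inE => /orP[]/eqP->; rewrite ?mem_next; move: xc; rewrite inE.
Qed.

Section Exchange.

Variables (I : pred nat) (F : nat -> seq W).
Hypothesis I_size : forall n, I n -> n < size C.
Hypothesis F_induced : forall n, I n -> is_induced_cycle g (F n).
Hypothesis F_sub :
  forall n x, I n -> x \in cverts (F n) -> exists2 p, I p & x \in cverts (nth [::] C p).
Hypothesis F_disjoint :
  forall n m, I n -> I m -> n != m -> [disjoint cverts (F n) & cverts (F m)].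

Definition exchange : seq (seq W) :=
  mkseq (fun n => if I n then F n else nth [::] C n) (size C).

Lemma exchange_disjoint_kept n m :
  solution g k C -> I n -> m < size C -> ~~ I m ->
  [disjoint cverts (F n) & cverts (nth [::] C m)].
Proof.
move=> solC In mC Im; rewrite disjoint_subset.
apply/subsetP => x /(F_sub In)[p Ip xp]; apply/negP => xm.
by move: Im; rewrite -(solution_index_uniq solC (I_size Ip) mC xp xm) Ip.
Qed.

Lemma induced_solution_exchange :
  induced_solution g k C -> induced_solution g k exchange.
Proof.
move=> [solC indC]; have [sizeC _ disjC] := solC.
have induced c : c \in exchange -> is_induced_cycle g c.
  case/mapP=> n; rewrite mem_iota => /andP[_ nC] ->.
  by case: ifP => [/F_induced | _] //; apply/indC/mem_nth.
split=> //; split=> [|c /induced[]//|]; first by rewrite size_mkseq.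
rewrite size_mkseq => n m nC mC nm; rewrite !nth_mkseq //.
case: (boolP (I n)) => In; case: (boolP (I m)) => Im; first exact: F_disjoint.
- exact: exchange_disjoint_kept.
- by rewrite disjoint_sym exchange_disjoint_kept.
- exact: disjC.
Qed.

Lemma n_special_triangles_exchange i :
  I i -> ~~ special_triangle r (nth [::] C i) ->
  (forall n, I n -> special_triangle r (F n)) ->
  n_special_triangles r C < n_special_triangles r exchange.
Proof.
move=> Ii nsp F_special.
rewrite /n_special_triangles /exchange -{1}(mkseq_nth [::] C) /mkseq !count_map.
apply: (sub_in_count_ltn (x := i)); rewrite /= ?Ii ?F_special ?mem_iota ?I_size //.
by move=> n _ /=; case: ifP => // In _; apply: F_special.
Qed.

Lemma not_in_scrS_exchange i :
  I i -> ~~ special_triangle r (nth [::] C i) ->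
  (forall n, I n -> special_triangle r (F n)) -> ~ in_scrS r g k C.
Proof.
move=> Ii nsp F_special [solC maxC].
have := maxC _ (induced_solution_exchange solC).
by rewrite leqNgt (n_special_triangles_exchange Ii nsp F_special).
Qed.

End Exchange.

End Solutions.

Section MapGraph.

Variables (W U : finType) (r : W -> U -> bool) (g : rel W).
Hypothesis HG : forall x y, g x y = half_square r x y.

Lemma map_graph_sym : symmetric g.
Proof.
move=> x y; rewrite !HG /half_square eq_sym; congr (_ && _).
by apply: eq_existsb => s; rewrite andbC.
Qed.

Lemma map_graph_irrefl : irreflexive g.
Proof. by move=> x; rewrite HG /half_square eqxx. Qed.

Lemma map_graph_adj_neq x y : g x y -> x != y.
Proof. by apply: contraTneq => ->; rewrite map_graph_irrefl. Qed.

Lemma map_graph_clique s x y :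
  x \in special_clique r s -> y \in special_clique r s -> x != y -> g x y.
Proof.
rewrite HG !inE => xK yK xy; rewrite /half_square xy.
by apply/existsP; exists s; rewrite xK yK.
Qed.

Lemma clique_triangle_induced s x y z :
  x \in special_clique r s -> y \in special_clique r s -> z \in special_clique r s ->
  x != y -> y != z -> z != x -> is_induced_cycle g [:: x; y; z].
Proof.
move=> xK yK zK xy yz zx.
by apply: triangle_induced_cycle map_graph_irrefl _ _ _; apply: (map_graph_clique (s := s)).
Qed.

Lemma edge_card e : is_edge g e -> #|e| = 2.
Proof. by case=> x [y [gxy ->]]; rewrite cards2 map_graph_adj_neq. Qed.

Lemma edge_other_end e u : is_edge g e -> u \in e -> exists2 a, g u a & e = [set u; a].
Proof.
case=> x [y [gxy ->]]; rewrite !inE => /orP[]/eqP->; first by exists y.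
by exists x; rewrite 1?map_graph_sym // setUC.
Qed.

Lemma edges_setU_card e e' : is_edge g e -> is_edge g e' -> e != e' -> 2 < #|e :|: e'|.
Proof.
move=> E E'; rewrite ltnNge; apply: contra => card_le2.
have fill f : is_edge g f -> f \subset e :|: e' -> f = e :|: e'.
  by move=> F sub; apply/eqP; rewrite eqEcard sub (edge_card F).
by apply/eqP; rewrite [LHS](fill e E (subsetUl _ _)) [RHS](fill e' E' (subsetUr _ _)).
Qed.

Variables (k : nat) (C : seq (seq W)).
Hypothesis HC : in_scrS r g k C.

Lemma scrS_cycle_clique_card i s :
  i < size C -> ~~ special_triangle r (nth [::] C i) ->
  #|cverts (nth [::] C i) :&: special_clique r s| <= 2.
Proof.
move=> iC nsp; rewrite leqNgt; apply/negP => /card_gt2P[x [y [z [[]]]]].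
move=> /setIP[xi xK] /setIP[yi yK] /setIP[zi zK] [xy yz zx].
apply: (@not_in_scrS_exchange _ _ r g k C (pred1 i) (fun=> [:: x; y; z]) _ _ _ _ i) HC;
  rewrite /= ?eqxx //.
- by move=> n /eqP->.
- by move=> n _; apply: (clique_triangle_induced xK yK zK).
- move=> n w _; rewrite !inE => /or3P[]/eqP->; by exists i; rewrite /= ?eqxx.
- by move=> n m /eqP-> /eqP->; rewrite eqxx.
- by move=> n _; apply: clique_special_triangle xK yK zK.
Qed.

Lemma scrS_two_cycles i j s1 s2 u v e1 e2 e3 e4 :
  i < size C -> j < size C -> i != j ->
  ~~ special_triangle r (nth [::] C i) -> ~~ special_triangle r (nth [::] C j) ->
  is_edge g e1 -> is_edge g e2 -> is_edge g e3 -> is_edge g e4 ->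
  e1 \subset cverts (nth [::] C i) :&: special_clique r s1 ->
  e3 \subset cverts (nth [::] C i) :&: special_clique r s2 ->
  e2 \subset cverts (nth [::] C j) :&: special_clique r s1 ->
  e4 \subset cverts (nth [::] C j) :&: special_clique r s2 ->
  e1 != e3 -> e2 != e4 -> u \in e1 -> u \in e3 -> v \in e2 -> v \in e4 -> False.
Proof.
move=> iC jC ij nspi nspj E1 E2 E3 E4 sub1 sub3 sub2 sub4 ne13 ne24 u1 u3 v2 v4.
have [a gua e1E] := edge_other_end E1 u1.
have [b gub e3E] := edge_other_end E3 u3.
have [c gvc e2E] := edge_other_end E2 v2.
have [d gvd e4E] := edge_other_end E4 v4.
have ab : a != b by apply: contraNneq ne13 => ab; rewrite e1E e3E ab.
have cd : c != d by apply: contraNneq ne24 => cd; rewrite e2E e4E cd.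
subst e1 e2 e3 e4.
have /setIP[ui uK1] := subsetP sub1 u (set21 u a).
have /setIP[ai aK1] := subsetP sub1 a (set22 u a).
have /setIP[_ uK2] := subsetP sub3 u (set21 u b).
have /setIP[bi bK2] := subsetP sub3 b (set22 u b).
have /setIP[vj vK1] := subsetP sub2 v (set21 v c).
have /setIP[cj cK1] := subsetP sub2 c (set22 v c).
have /setIP[_ vK2] := subsetP sub4 v (set21 v d).
have /setIP[dj dK2] := subsetP sub4 d (set22 v d).
have sep x y : x \in cverts (nth [::] C i) -> y \in cverts (nth [::] C j) -> x != y.
  move=> xi yj; apply: contraNneq ij => exy.
  by apply/eqP/(solution_index_uniq HC.1.1 iC jC xi); rewrite exy.
pose T1 := [:: u; a; c]; pose T2 := [:: b; v; d].
have disjT : [disjoint cverts T1 & cverts T2].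
  rewrite disjoint_subset; apply/subsetP => w; rewrite !inE.
  case/or3P=> /eqP->; rewrite !negb_or.
  - by rewrite map_graph_adj_neq // !sep.
  - by rewrite ab !sep.
  - by rewrite eq_sym sep // eq_sym map_graph_adj_neq.
have ji : (j == i) = false by rewrite eq_sym (negbTE ij).
pose F n := if n == i then T1 else T2.
apply: (@not_in_scrS_exchange _ _ r g k C (pred2 i j) F _ _ _ _ i) HC;
  rewrite /= ?eqxx //.
- by move=> n /pred2P[]->.
- move=> n _; rewrite /F; case: ifP => _.
    apply: (clique_triangle_induced uK1 aK1 cK1);
      by [apply: map_graph_adj_neq | apply: sep | rewrite eq_sym sep].
  apply: (clique_triangle_induced bK2 vK2 dK2);
    by [apply: sep | apply: map_graph_adj_neq | rewrite eq_sym sep].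
- move=> n w _; rewrite /F; case: ifP => _; rewrite !inE => /or3P[]/eqP->;
    by [exists i; rewrite /= ?eqxx | exists j; rewrite /= ?eqxx ?orbT].
- move=> n m /pred2P[]-> /pred2P[]->; rewrite /F ?eqxx // ji //.
  by rewrite disjoint_sym.
- move=> n _; rewrite /F; case: ifP => _.
    exact: clique_special_triangle uK1 aK1 cK1.
  exact: clique_special_triangle bK2 vK2 dK2.
Qed.

End MapGraph.

Theorem lemma41 (W U : finType) (r : W -> U -> bool) (g : rel W) (k : nat)
  (HB : planar (bip_adj r))
  (HG : forall x y, g x y = half_square r x y)
  (Hk : 0 < k)
  (C : seq (seq W)) (HC : in_scrS r g k C)
  (s1 s2 : U) :
  ~ exists (u v : W) (e1 e2 e3 e4 : {set W}),
      [/\ u != v,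
          u \in verts_of (C2_part r C) :&: special_clique r s1 :&: special_clique r s2,
          v \in verts_of (C2_part r C) :&: special_clique r s1 :&: special_clique r s2,
          uniq [:: e1; e2; e3; e4] &
          (forall e, e \in [:: e1; e2; e3; e4] -> is_edge g e)] /\
      [/\ e1 \in edges_of (C2_part r C) /\ e1 \subset special_clique r s1,
          e2 \in edges_of (C2_part r C) /\ e2 \subset special_clique r s1,
          e3 \in edges_of (C2_part r C) /\ e3 \subset special_clique r s2,
          e4 \in edges_of (C2_part r C) /\ e4 \subset special_clique r s2 &
          [/\ u \in e1, u \in e3, v \in e2 & v \in e4]].
Proof.
move=> [u [v [e1 [e2 [e3 [e4 [[_ _ _ uniq_e is_e]
  [[C2e1 K1e1] [C2e2 K1e2] [C2e3 K2e3] [C2e4 K2e4] [u1 u3 v2 v4]]]]]]]]].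
have [E1 E2 E3 E4] : [/\ is_edge g e1, is_edge g e2, is_edge g e3 & is_edge g e4].
  by split; apply: is_e; rewrite !inE eqxx ?orbT.
have [ne12 ne13 ne24] : [/\ e1 != e2, e1 != e3 & e2 != e4].
  by move: uniq_e; rewrite /= !inE !negb_or => /and4P[/and3P[-> -> _] /andP[_ ->]].
have [i1 i1C /andP[sub1 nsp1]] := edges_of_C2_part C2e1.
have [i2 i2C /andP[sub2 nsp2]] := edges_of_C2_part C2e2.
have [i3 i3C /andP[sub3 _]] := edges_of_C2_part C2e3.
have [i4 i4C /andP[sub4 _]] := edges_of_C2_part C2e4.
have solC := HC.1.1.
have i31 := solution_index_uniq solC i3C i1C (subsetP sub3 u u3) (subsetP sub1 u u1).
have i42 := solution_index_uniq solC i4C i2C (subsetP sub4 v v4) (subsetP sub2 v v2).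
subst i3 i4.
case: (eqVneq i1 i2) => [i12 | ne_i].
  subst i2; have := scrS_cycle_clique_card HG HC s1 i1C nsp1.
  rewrite leqNgt => /negP; apply; apply: leq_trans (edges_setU_card HG E1 E2 ne12) _.
  by apply: subset_leq_card; rewrite subUset !subsetI sub1 sub2 K1e1 K1e2.
apply: (scrS_two_cycles (s1 := s1) (s2 := s2) HG HC i1C i2C ne_i nsp1 nsp2 E1 E2 E3 E4)
  ne13 ne24 u1 u3 v2 v4;
  by rewrite subsetI ?sub1 ?sub2 ?sub3 ?sub4 ?K1e1 ?K1e2 ?K2e3 ?K2e4.
Qed.
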